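(* For any two subsets $I,J\subseteq\{1,\dots,n\}$, $F_I=F_J$ if and only if $\overline I^0=\overline J^0$ (equivalently $\Pi_{\overline I^0}=\Pi_{\overline J^0}$).
   Context: Let $\mathfrak g$ be a finite-dimensional complex simple Lie algebra with root system $\Phi$, base $\Pi=\{\alpha_1,\dots,\alpha_n\}$, Weyl group $W$; $E$ is the real span of $\Pi$ with $W$-invariant inner product $(\cdot,\cdot)$. Fix a dominant integral weight $\lambda=\sum_i m_i\alpha_i$. For $x\in E$, $c_i(x)$ is the coefficient of $\alpha_i$ in $x$. Weight polytope $\mathbf P=\mathrm{conv}(W\lambda)$, and $F_I=\{x\in\mathbf P\mid c_i(x)=m_i\ \forall i\in I\}$ for $I\subseteq\{1,\dots,n\}$. The extended Dynkin diagram is the Dynkin diagram of $\Pi$ plus a node $\{-\lambda\}$ joined to $\alpha_i$ iff $(\lambda,\alpha_i)>0$. For $I\subseteq\{1,\dots,n\}$ with complement $\overline I$, $\overline I^0$ is the set of indices $j$ such that $\alpha_j$ lies in the connected component containing $\{-\lambda\}$ of the induced subdiagram on $\{\alpha_j\mid j\in\overline I\}\cup\{-\lambda\}$; $\Pi_{\overline I^0}=\{\alpha_j\mid j\in\overline I^0\}$. *)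

From HB Require Import structures.
From mathcomp Require Import all_boot all_order all_algebra.
From mathcomp Require Import reals.
Set Implicit Arguments. Unset Strict Implicit. Unset Printing Implicit Defensive.
Import Order.TTheory GRing.Theory Num.Theory.
Local Open Scope ring_scope.

Section RootData.
Variables (R : realType) (n : nat).
Local Notation vec := 'rV[R]_n.

Definition dot (u v : vec) : R := \sum_(i < n) u 0 i * v 0 i.

Definition refl (a v : vec) : vec := v - ((2 * dot v a) / dot a a) *: a.

Definition root_system (Phi : seq vec) : Prop :=
  [/\ (0 : vec) \notin Phi,
      (<<Phi>>%VS = fullv),
      (forall a b, a \in Phi -> b \in Phi -> refl a b \in Phi),
      (forall a b, a \in Phi -> b \in Phi ->
         exists z : int, (2 * dot b a) / dot a a = z%:~R) &
      (forall a (c : R), a \in Phi -> c *: a \in Phi -> c = 1 \/ c = -1)].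

Definition irreducible_rs (Phi : seq vec) : Prop :=
  forall P : pred vec,
    (forall a b, a \in Phi -> b \in Phi -> P a -> ~~ P b -> dot a b = 0) ->
    (forall a, a \in Phi -> P a) \/ (forall a, a \in Phi -> ~~ P a).

Definition base_mx (alpha : 'I_n -> vec) : 'M[R]_n := \matrix_(i < n) alpha i.

Definition is_base (Phi : seq vec) (alpha : 'I_n -> vec) : Prop :=
  [/\ (forall i, alpha i \in Phi),
      row_free (base_mx alpha) &
      (forall b, b \in Phi -> exists k : 'I_n -> int,
          b = \sum_(i < n) (k i)%:~R *: alpha i /\
          ((forall i, 0 <= k i) \/ (forall i, k i <= 0)))].

(* c_i(x): coefficient of alpha_i in x *)
Definition coef (alpha : 'I_n -> vec) (x : vec) (i : 'I_n) : R :=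
  (x *m invmx (base_mx alpha)) 0 i.

Definition dominant_integral (alpha : 'I_n -> vec) (lam : vec) : Prop :=
  forall i, exists k : nat, (2 * dot lam (alpha i)) / dot (alpha i) (alpha i) = k%:R.

(* W lambda: images of lambda under products of reflections s_a, a in Phi
   (W is generated by these reflections) *)
Definition weyl_orbit (Phi : seq vec) (lam x : vec) : Prop :=
  exists s : seq vec, all (mem Phi) s /\ x = foldr refl lam s.

Definition conv (S : vec -> Prop) (x : vec) : Prop :=
  exists (k : nat) (p : 'I_k -> vec) (w : 'I_k -> R),
    [/\ (forall j, S (p j)), (forall j, 0 <= w j),
        \sum_(j < k) w j = 1 & x = \sum_(j < k) w j *: p j].

Definition weight_polytope (Phi : seq vec) (lam : vec) : vec -> Prop :=
  conv (weyl_orbit Phi lam).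

Definition face (Phi : seq vec) (alpha : 'I_n -> vec) (lam : vec)
  (I : {set 'I_n}) (x : vec) : Prop :=
  weight_polytope Phi lam x /\ (forall i, i \in I -> coef alpha x i = coef alpha lam i).

(* extended Dynkin diagram: vertex None = {-lambda}, Some i = alpha_i *)
Definition ext_adj (alpha : 'I_n -> vec) (lam : vec) : rel (option 'I_n) :=
  fun u v => match u, v with
  | None, None => false
  | None, Some i | Some i, None => 0 < dot lam (alpha i)
  | Some i, Some j => (i != j) && (dot (alpha i) (alpha j) != 0)
  end.

Definition in_sub (I : {set 'I_n}) (u : option 'I_n) : bool :=
  if u is Some j then j \notin I else true.

Definition ext_adj_sub alpha lam (I : {set 'I_n}) : rel (option 'I_n) :=
  fun u v => [&& ext_adj alpha lam u v, in_sub I u & in_sub I v].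

Definition Ibar0 alpha lam (I : {set 'I_n}) : {set 'I_n} :=
  [set j | (j \notin I) && connect (ext_adj_sub alpha lam I) None (Some j)].

End RootData.

From HB Require Import structures.
From mathcomp Require Import all_boot all_order all_algebra.
From mathcomp Require Import reals.
From mathcomp Require Import ring lra.
Set Implicit Arguments. Unset Strict Implicit. Unset Printing Implicit Defensive.
Import Order.TTheory GRing.Theory Num.Theory.
Local Open Scope ring_scope.

(* Write K = Ibar0 I and call the indices of the complement of I outside K
   detached; detached simple roots are orthogonal to lambda and to every
   alpha_k, k in K.  Then F_I is cut out of P by the equations c_l(x) = c_l(lambda)
   for all l outside K.  Since every w lambda lies in lambda - Q+, it suffices
   to see this on orbit points w lambda agreeing with lambda on I: if such a
   point had a positive deficit on the detached indices, its pairing with the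
   detached part v of lambda - w lambda would be -|v|^2 < 0, so some detached
   simple reflection raises w lambda and strictly lowers the (integral)
   deficit, which is impossible forever.  Conversely, walking from {-lambda}
   along the Dynkin subdiagram, each j in K is lowered by some w lambda fixing
   every coordinate outside K, so F_I determines K. *)

Lemma connect_ind (T : finType) (e : rel T) (P : T -> Prop) x :
  P x -> (forall u v, connect e x u -> P u -> e u v -> P v) ->
  forall y, connect e x y -> P y.
Proof.
move=> Px step y /connectP [p pth ->] {y}.
suff: forall u, connect e x u -> P u -> path e u p -> P (last u p) by apply.
elim: p {pth} => [//|v p IH] u cxu Pu /= /andP [euv pv].
exact: IH (connect_trans cxu (connect1 euv)) (step _ _ cxu Pu euv) pv.
Qed.

Lemma convex_comb_eq_max (R : numDomainType) (k : nat) (w a : 'I_k -> R) (m : R) :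
  (forall j, 0 <= w j) -> \sum_j w j = 1 -> (forall j, a j <= m) ->
  \sum_j w j * a j = m -> forall j, w j != 0 -> a j = m.
Proof.
move=> w_ge0 w_sum a_le wa_sum j wj_neq0.
have gap_ge0 i : 0 <= w i * (m - a i) by rewrite mulr_ge0 ?subr_ge0.
have /psumr_eq0P gap0 : \sum_i w i * (m - a i) = 0.
  by under eq_bigr do rewrite mulrBr; rewrite sumrB -mulr_suml w_sum mul1r wa_sum subrr.
have /eqP := gap0 (fun i _ => gap_ge0 i) j isT.
by rewrite mulf_eq0 (negbTE wj_neq0) subr_eq0 => /eqP.
Qed.

Section InnerProduct.
Variables (R : realType) (n : nat).
Local Notation vec := 'rV[R]_n.
Implicit Types (u v w : vec).

Lemma dotC u v : dot u v = dot v u.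
Proof. by apply: eq_bigr => i _; rewrite mulrC. Qed.

Lemma dotDl u v w : dot (u + v) w = dot u w + dot v w.
Proof. by rewrite /dot -big_split; apply: eq_bigr => i _; rewrite mxE mulrDl. Qed.

Lemma dotZl (k : R) u w : dot (k *: u) w = k * dot u w.
Proof. by rewrite /dot mulr_sumr; apply: eq_bigr => i _; rewrite mxE mulrA. Qed.

Lemma dotNl u w : dot (- u) w = - dot u w.
Proof. by rewrite -scaleN1r dotZl mulN1r. Qed.

Lemma dotBl u v w : dot (u - v) w = dot u w - dot v w.
Proof. by rewrite dotDl dotNl. Qed.

Lemma dot0l w : dot 0 w = 0.
Proof. by rewrite -(scale0r 0) dotZl mul0r. Qed.

Lemma dotZr (k : R) u w : dot w (k *: u) = k * dot w u.
Proof. by rewrite !(dotC w) dotZl. Qed.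

Lemma dotNr u w : dot w (- u) = - dot w u.
Proof. by rewrite !(dotC w) dotNl. Qed.

Lemma dotBr u v w : dot w (u - v) = dot w u - dot w v.
Proof. by rewrite !(dotC w) dotBl. Qed.

Lemma dot_suml (I : Type) (r : seq I) (F : I -> vec) w :
  dot (\sum_(i <- r) F i) w = \sum_(i <- r) dot (F i) w.
Proof.
elim: r => [|a r IH]; first by rewrite !big_nil dot0l.
by rewrite !big_cons dotDl IH.
Qed.

Lemma dot_sumr (I : Type) (r : seq I) (F : I -> vec) w :
  dot w (\sum_(i <- r) F i) = \sum_(i <- r) dot w (F i).
Proof. by rewrite dotC dot_suml; apply: eq_bigr => i _; rewrite dotC. Qed.

Lemma dotxx_gt0 u : u != 0 -> 0 < dot u u.
Proof.
move=> u_neq0; have sq_ge0 i : 0 <= u 0 i * u 0 i by rewrite -expr2 sqr_ge0.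
rewrite lt_def sumr_ge0 // andbT; apply: contra u_neq0.
rewrite psumr_eq0 // => /allP u0; apply/eqP/rowP => i; rewrite mxE.
by have /implyP/(_ isT) := u0 i (mem_index_enum i); rewrite mulf_eq0 orbb => /eqP.
Qed.

End InnerProduct.

Section Reflection.
Variables (R : realType) (n : nat).
Local Notation vec := 'rV[R]_n.
Implicit Types (a u v x : vec).

Definition cartan v a : R := 2 * dot v a / dot a a.

Lemma reflE a v : refl a v = v - cartan v a *: a.
Proof. by []. Qed.

Lemma cartanDl u v a : cartan (u + v) a = cartan u a + cartan v a.
Proof. by rewrite /cartan dotDl mulrDr mulrDl. Qed.

Lemma cartanZl (k : R) v a : cartan (k *: v) a = k * cartan v a.
Proof. by rewrite /cartan dotZl !mulrA (mulrC 2 k). Qed.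

Lemma cartanBl u v a : cartan (u - v) a = cartan u a - cartan v a.
Proof. by rewrite cartanDl -scaleN1r cartanZl mulN1r. Qed.

Lemma cartan_gt0 v a : a != 0 -> (0 < cartan v a) = (0 < dot v a).
Proof. by move=> a_neq0; rewrite pmulr_lgt0 ?invr_gt0 ?dotxx_gt0 // pmulr_rgt0. Qed.

Lemma cartan_ge0 v a : a != 0 -> (0 <= cartan v a) = (0 <= dot v a).
Proof. by move=> a_neq0; rewrite pmulr_lge0 ?invr_gt0 ?dotxx_gt0 // pmulr_rge0. Qed.

Lemma cartan_lt0 v a : a != 0 -> (cartan v a < 0) = (dot v a < 0).
Proof. by move=> a_neq0; rewrite pmulr_llt0 ?invr_gt0 ?dotxx_gt0 // pmulr_rlt0. Qed.

Lemma reflD a u v : refl a (u + v) = refl a u + refl a v.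
Proof. by rewrite !reflE cartanDl scalerDl opprD addrACA. Qed.

Lemma reflZ a (k : R) v : refl a (k *: v) = k *: refl a v.
Proof. by rewrite !reflE cartanZl scalerBr scalerA. Qed.

Lemma reflN a v : refl a (- v) = - refl a v.
Proof. by rewrite -!scaleN1r reflZ. Qed.

Lemma reflB a u v : refl a (u - v) = refl a u - refl a v.
Proof. by rewrite reflD reflN. Qed.

Lemma refl_id a : a != 0 -> refl a a = - a.
Proof.
move=> /dotxx_gt0 /lt0r_neq0 aa_neq0.
by rewrite reflE /cartan mulfK // scaler_nat mulr2n opprD addNKr.
Qed.

Lemma reflK a v : a != 0 -> refl a (refl a v) = v.
Proof. by move=> a_neq0; rewrite reflB reflZ refl_id // scalerN opprK reflE addrNK. Qed.

Lemma refl_dot a u v : a != 0 -> dot (refl a u) (refl a v) = dot u v.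
Proof.
move=> /dotxx_gt0 /lt0r_neq0 aa_neq0.
by rewrite !reflE dotBl !dotBr !dotZl !dotZr /cartan !(dotC a); field.
Qed.

Lemma refl_conj a b x : b != 0 -> refl b (refl a x) = refl (refl b a) (refl b x).
Proof.
move=> b_neq0; rewrite [in RHS]reflE /cartan !refl_dot // -/(cartan x a).
by rewrite (reflE a x) reflB reflZ.
Qed.

Lemma reflNr a v : refl (- a) v = refl a v.
Proof. by rewrite !reflE /cartan dotNr dotNl dotNr opprK !mulrN mulNr scalerN scaleNr opprK. Qed.

End Reflection.

Section SimpleSystem.
Variables (R : realType) (n : nat) (Phi : seq 'rV[R]_n) (alpha : 'I_n -> 'rV[R]_n).
Local Notation vec := 'rV[R]_n.
Implicit Types (b x y : vec).
Hypothesis Phi_rs : root_system Phi.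
Hypothesis alpha_base : is_base Phi alpha.

Local Notation c := (coef alpha).

Lemma base_mx_unit : base_mx alpha \in unitmx.
Proof. by case: alpha_base => _ free _; rewrite -row_free_unit. Qed.

Lemma coefD x y i : c (x + y) i = c x i + c y i.
Proof. by rewrite /coef mulmxDl mxE. Qed.

Lemma coefZ (k : R) x i : c (k *: x) i = k * c x i.
Proof. by rewrite /coef -scalemxAl mxE. Qed.

Lemma coefN x i : c (- x) i = - c x i.
Proof. by rewrite /coef mulNmx mxE. Qed.

Lemma coefB x y i : c (x - y) i = c x i - c y i.
Proof. by rewrite coefD coefN. Qed.

Lemma coef0 i : c 0 i = 0.
Proof. by rewrite /coef mul0mx mxE. Qed.

Lemma coef_sum (I : Type) (r : seq I) (F : I -> vec) i :
  c (\sum_(k <- r) F k) i = \sum_(k <- r) c (F k) i.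
Proof.
elim: r => [|a r IH]; first by rewrite !big_nil coef0.
by rewrite !big_cons coefD IH.
Qed.

Lemma coef_alpha j i : c (alpha j) i = (i == j)%:R.
Proof.
rewrite /coef -(rowK alpha j) -row_mul mulmxV ?base_mx_unit //.
by rewrite !mxE eq_sym.
Qed.

Lemma coef_expansion x : x = \sum_i c x i *: alpha i.
Proof.
rewrite -[x in LHS]mulmx1 -(mulVmx base_mx_unit) mulmxA mulmx_sum_row.
by apply: eq_bigr => i _; rewrite rowK.
Qed.

Lemma coef_inj x y : (forall i, c x i = c y i) -> x = y.
Proof.
by move=> cxy; rewrite (coef_expansion x) (coef_expansion y); under eq_bigr do rewrite cxy.
Qed.

Lemma coef_comb (k : 'I_n -> R) i : c (\sum_j k j *: alpha j) i = k i.
Proof.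
rewrite coef_sum (bigD1 i) //= big1 ?addr0 => [|j /negbTE ji].
  by rewrite coefZ coef_alpha eqxx mulr1.
by rewrite coefZ coef_alpha eq_sym ji mulr0.
Qed.

Lemma coef_refl_simple x j i :
  c (refl (alpha j) x) i = c x i - cartan x (alpha j) * (i == j)%:R.
Proof. by rewrite reflE coefB coefZ coef_alpha. Qed.

Lemma coef_refl_simple_neq x j i : i != j -> c (refl (alpha j) x) i = c x i.
Proof. by move=> /negbTE ij; rewrite coef_refl_simple ij mulr0 subr0. Qed.

Lemma alpha_root j : alpha j \in Phi.
Proof. by case: alpha_base. Qed.

Lemma root_neq0 b : b \in Phi -> b != 0.
Proof. by case: Phi_rs => Phi0 _ _ _ _ Phib; apply: contraNneq Phi0 => <-. Qed.

Lemma alpha_neq0 j : alpha j != 0.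
Proof. exact/root_neq0/alpha_root. Qed.

Lemma refl_root a b : a \in Phi -> b \in Phi -> refl a b \in Phi.
Proof. by case: Phi_rs => _ _ refl_Phi _ _; apply: refl_Phi. Qed.

Lemma cartan_root_int a b : a \in Phi -> b \in Phi -> exists z : int, cartan b a = z%:~R.
Proof. by case: Phi_rs => _ _ _ cartan_int _; apply: cartan_int. Qed.

Lemma root_opp b : b \in Phi -> - b \in Phi.
Proof. by move=> Phib; rewrite -refl_id ?root_neq0 ?refl_root. Qed.

Lemma dot_sub_expand x y j : dot y (alpha j) =
  dot x (alpha j) - \sum_i (c x i - c y i) * dot (alpha i) (alpha j).
Proof.
have yE : y = x - \sum_i (c x i - c y i) *: alpha i.
  by apply: coef_inj => i; rewrite coefB coef_comb opprB addrC subrK.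
by rewrite {1}yE dotBl dot_suml; under eq_bigr do rewrite dotZl.
Qed.

Definition pos x := [forall i, 0 <= c x i].
Definition neg x := [forall i, c x i <= 0].

Lemma root_pos_or_neg b : b \in Phi -> pos b || neg b.
Proof.
case: alpha_base => _ _ comb /comb [k [-> [] k_sign]]; apply/orP; [left|right];
  by apply/forallP => i; rewrite coef_comb ?ler0z ?lerz0 k_sign.
Qed.

Lemma root_not_pos_neg b : b \in Phi -> pos b -> neg b -> False.
Proof.
move=> /root_neq0 /eqP b_neq0 /forallP b_pos /forallP b_neg; apply: b_neq0.
by apply: coef_inj => i; rewrite coef0; apply/eqP; rewrite eq_le b_pos b_neg.
Qed.

Lemma posN x : pos (- x) = neg x.
Proof. by apply/forallP/forallP => h i; move: (h i); rewrite coefN ?oppr_ge0 ?oppr_le0. Qed.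

Lemma posD x y : pos x -> pos y -> pos (x + y).
Proof. by move=> /forallP px /forallP py; apply/forallP => i; rewrite coefD addr_ge0. Qed.

Lemma posZ (k : R) x : 0 <= k -> pos x -> pos (k *: x).
Proof. by move=> k_ge0 /forallP px; apply/forallP => i; rewrite coefZ mulr_ge0. Qed.

Lemma pos_alpha j : pos (alpha j).
Proof. by apply/forallP => i; rewrite coef_alpha ler0n. Qed.

Lemma simple_dot_le0 i j : i != j -> dot (alpha i) (alpha j) <= 0.
Proof.
move=> ij; rewrite leNgt; apply/negP => dot_gt0.
have ci : c (refl (alpha j) (alpha i)) i = 1.
  by rewrite coef_refl_simple_neq // coef_alpha eqxx.
have cj : c (refl (alpha j) (alpha i)) j < 0.
  rewrite coef_refl_simple coef_alpha eqxx eq_sym (negbTE ij) mulr1 sub0r.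
  by rewrite oppr_lt0 cartan_gt0 ?alpha_neq0.
case/orP: (root_pos_or_neg (refl_root (alpha_root j) (alpha_root i))) => /forallP.
  by move=> /(_ j); rewrite leNgt cj.
by move=> /(_ i); rewrite ci ler10.
Qed.

Lemma refl_simple_pos j b : b \in Phi -> pos b -> b != alpha j ->
  pos (refl (alpha j) b).
Proof.
move=> Phib b_pos b_neq.
case: (boolP [exists i, (i != j) && (0 < c b i)]) => [/existsP [i /andP [ij ci]]|].
  case/orP: (root_pos_or_neg (refl_root (alpha_root j) Phib)) => // /forallP/(_ i).
  by rewrite coef_refl_simple_neq // leNgt ci.
rewrite negb_exists => /forallP only_j.
have b_prop : b = c b j *: alpha j.
  apply: coef_inj => i; rewrite coefZ coef_alpha.
  have [->|ij] := eqVneq i j; first by rewrite mulr1.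
  move: (only_j i); rewrite ij /= mulr0 -leNgt => ci_le0.
  by apply/eqP; rewrite eq_le ci_le0 (forallP b_pos).
case: Phi_rs => _ _ _ _ /(_ (alpha j) (c b j) (alpha_root j)).
rewrite -b_prop => /(_ Phib) [cbj1|cbjN1].
  by move: b_neq; rewrite b_prop cbj1 scale1r eqxx.
by move/forallP: b_pos => /(_ j); rewrite cbjN1 oppr_ge0 ler10.
Qed.

Definition wact (s : seq 'I_n) x := foldr (fun j => refl (alpha j)) x s.

Lemma wact_cat s1 s2 x : wact (s1 ++ s2) x = wact s1 (wact s2 x).
Proof. exact: foldr_cat. Qed.

Lemma wact_rcons s j x : wact (rcons s j) x = wact s (refl (alpha j) x).
Proof. by rewrite -cats1 wact_cat. Qed.

Lemma wactZ s (k : R) x : wact s (k *: x) = k *: wact s x.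
Proof. by elim: s => //= j s ->; rewrite reflZ. Qed.

Lemma wactN s x : wact s (- x) = - wact s x.
Proof. by elim: s => //= j s ->; rewrite reflN. Qed.

Lemma wactB s x y : wact s (x - y) = wact s x - wact s y.
Proof. by elim: s => //= j s ->; rewrite reflB. Qed.

Lemma wact_root s b : b \in Phi -> wact s b \in Phi.
Proof. by elim: s => //= j s IH /IH; apply: refl_root (alpha_root j). Qed.

Lemma wact_conj s a x : wact s (refl a x) = refl (wact s a) (wact s x).
Proof. by elim: s => //= j s ->; rewrite refl_conj ?alpha_neq0. Qed.

Lemma wact_rev s x : wact s (wact (rev s) x) = x.
Proof.
elim: s x => //= j s IH x.
by rewrite rev_cons wact_rcons IH reflK ?alpha_neq0.
Qed.

Lemma wact_deletion s j : neg (wact s (alpha j)) ->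
  exists2 s', (size s' < size s)%N & forall x, wact s (refl (alpha j) x) = wact s' x.
Proof.
elim: s => [|a s IH] /= neg_sj.
  by case: (root_not_pos_neg (alpha_root j) (pos_alpha j) neg_sj).
set b := wact s (alpha j) in neg_sj *.
have Phib : b \in Phi by apply/wact_root/alpha_root.
have [neg_b|neg_bN] := boolP (neg b).
  by have [s' lt_s' ws'] := IH neg_b; exists (a :: s') => // x /=; rewrite ws'.
have b_pos : pos b by case/orP: (root_pos_or_neg Phib) neg_bN => // ->.
have b_eq : b = alpha a.
  apply/eqP; apply: contraT => b_neq; have := refl_simple_pos Phib b_pos b_neq.
  by case/(root_not_pos_neg (refl_root (alpha_root a) Phib)).
by exists s => // x; rewrite wact_conj -/b b_eq reflK ?alpha_neq0.
Qed.

Definition height x := \sum_i c x i.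

Lemma height_refl_simple x j : height (refl (alpha j) x) = height x - cartan x (alpha j).
Proof.
rewrite /height; under eq_bigr do rewrite coef_refl_simple.
rewrite sumrB; congr (_ - _); rewrite (bigD1 j) //= eqxx mulr1 big1 ?addr0 // => i /negbTE ->.
by rewrite mulr0.
Qed.

(* Induction on the height: a positive non-simple root pairs positively with
   some alpha_j, and s_j lowers its height by a positive integer. *)
Lemma pos_root_wconj b : b \in Phi -> pos b ->
  exists s j, b = wact s (alpha j).
Proof.
move=> Phib b_pos.
have height_ge0 x : pos x -> 0 <= height x by move=> /forallP px; apply: sumr_ge0.
move: (archi_boundP (height_ge0 b b_pos)); move: (Num.Def.archi_bound _) => N.
elim: N b Phib b_pos => [|N IH] b Phib b_pos ht_lt.
  by rewrite ltNge height_ge0 in ht_lt.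
have [/existsP [j /eqP ->]|] := boolP [exists j, b == alpha j]; first by exists [::], j.
rewrite negb_exists => /forallP b_nsimple.
have [j dot_gt0] : exists j, 0 < dot b (alpha j).
  apply/existsP; apply: contraT; rewrite negb_exists => /forallP dot_le0.
  have := dotxx_gt0 (root_neq0 Phib); rewrite {2}(coef_expansion b) dot_sumr.
  rewrite ltNge sumr_le0 // => i _; rewrite dotZr mulr_ge0_le0 ?(forallP b_pos) //.
  by rewrite leNgt dot_le0.
have cartan_ge1 : 1 <= cartan b (alpha j).
  have [z zE] := cartan_root_int (alpha_root j) Phib.
  move: dot_gt0; rewrite -cartan_gt0 ?alpha_neq0 // zE ltr0z ler1z; exact.
have [s [k bE]] : exists s k, refl (alpha j) b = wact s (alpha k).
  apply: IH; first exact: refl_root (alpha_root j) Phib.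
    exact: refl_simple_pos (b_nsimple j).
  by rewrite height_refl_simple; move: ht_lt; rewrite mulrS; lra.
by exists (j :: s), k; rewrite /= -bE reflK ?alpha_neq0.
Qed.

Lemma refl_root_wact b : b \in Phi -> exists s, forall x, refl b x = wact s x.
Proof.
have pos_case a : a \in Phi -> pos a -> exists s, forall x, refl a x = wact s x.
  move=> Phia a_pos; have [u [j ->]] := pos_root_wconj Phia a_pos.
  exists (u ++ j :: rev u) => x.
  by rewrite -{1}(wact_rev u x) -wact_conj wact_cat.
move=> Phib; case/orP: (root_pos_or_neg Phib) => [|b_neg]; first exact: pos_case.
have [|s sE] := pos_case (- b) (root_opp Phib); first by rewrite posN.
by exists s => x; rewrite -sE reflNr.
Qed.

Lemma weyl_orbitP lam x : weyl_orbit Phi lam x <-> exists s, x = wact s lam.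
Proof.
split=> [[bs [Phi_bs ->]]|[s ->]].
  elim: bs Phi_bs => [|b bs IH] /=; first by exists [::].
  case/andP => /refl_root_wact [t tE] /IH [s ->].
  by exists (t ++ s); rewrite tE wact_cat.
exists (map alpha s); split; first by apply/allP => _ /mapP [j _ ->]; apply: alpha_root.
by elim: s => //= j s ->.
Qed.

Section Dominant.
Variable lam : vec.
Hypothesis lam_dom : dominant_integral alpha lam.

Lemma cartan_lam_ge0 j : 0 <= cartan lam (alpha j).
Proof. by case: (lam_dom j) => k; rewrite /cartan => ->. Qed.

Lemma dot_lam_ge0 j : 0 <= dot lam (alpha j).
Proof. by rewrite -cartan_ge0 ?alpha_neq0 ?cartan_lam_ge0. Qed.

(* Induction on the length of the word, shortened by the deletion condition;
   dominance makes the extra term a nonnegative multiple of a positive root. *)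
Lemma lam_sub_wact_pos s : pos (lam - wact s lam).
Proof.
elim: {s}(size s).+1 {-2}s (ltnSn (size s)) => // N IH s.
have [/existsP [j neg_sj]|] := boolP [exists j, neg (wact s (alpha j))].
  have [s' lt_s' s'E] := wact_deletion neg_sj => lt_sN.
  have sE : wact s lam = wact s' lam - cartan lam (alpha j) *: wact s' (alpha j).
    by rewrite -[in LHS](reflK lam (alpha_neq0 j)) s'E reflE wactB wactZ.
  have s'j : wact s' (alpha j) = - wact s (alpha j).
    by rewrite -s'E refl_id ?alpha_neq0 // wactN.
  rewrite sE opprB addrCA addrC posD ?IH ?(leq_trans lt_s') //.
  by rewrite s'j posZ ?cartan_lam_ge0 ?posN.
rewrite negb_exists => /forallP nneg_s.
case/lastP: s nneg_s => [_ _|s a nneg_s]; first by rewrite subrr; apply/forallP => i; rewrite coef0.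
rewrite size_rcons ltnS => lt_sN.
have neg_sa : neg (wact s (alpha a)).
  have := root_pos_or_neg (wact_root (rcons s a) (alpha_root a)).
  by rewrite (negbTE (nneg_s a)) orbF wact_rcons refl_id ?alpha_neq0 // wactN posN.
have [s' lt_s' s'E] := wact_deletion neg_sa.
by rewrite wact_rcons s'E IH ?(ltn_trans lt_s').
Qed.

Lemma cartan_wact_int s j : exists z : int, cartan (wact s lam) (alpha j) = z%:~R.
Proof.
elim: s j => [|a s IH] j /=; first by case: (lam_dom j) => k kE; exists k%:Z.
rewrite reflE cartanBl cartanZl.
have [[z1 ->] [z2 ->]] := (IH j, IH a).
have [z3 ->] := cartan_root_int (alpha_root j) (alpha_root a).
by exists (z1 - z2 * z3); rewrite intrB intrM.
Qed.

Lemma cartan_wact_le_N1 s j :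
  dot (wact s lam) (alpha j) < 0 -> cartan (wact s lam) (alpha j) <= -1.
Proof.
rewrite -cartan_lt0 ?alpha_neq0 //; have [z ->] := cartan_wact_int s j.
rewrite ltrz0 => z_lt0; have : z <= -1 by rewrite -ltzD1 addrC subrr.
by rewrite -(ler_int R).
Qed.

Lemma wact_coef_le s i : c (wact s lam) i <= c lam i.
Proof. by move/forallP: (lam_sub_wact_pos s) => /(_ i); rewrite coefB subr_ge0. Qed.

Lemma weyl_orbit_coef_le p i : weyl_orbit Phi lam p -> c p i <= c lam i.
Proof. by case/weyl_orbitP => s ->; apply: wact_coef_le. Qed.

Lemma wact_polytope s : weight_polytope Phi lam (wact s lam).
Proof.
exists 1%N, (fun _ => wact s lam), (fun _ => 1); split=> //.
- by move=> _; apply/weyl_orbitP; exists s.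
- by rewrite big_ord1.
- by rewrite big_ord1 scale1r.
Qed.

Section Faces.
Variable I : {set 'I_n}.
Local Notation K := (Ibar0 alpha lam I).

Definition detached i := (i \notin I) && (i \notin K).

Lemma detached_lam_dot j : detached j -> dot lam (alpha j) = 0.
Proof.
case/andP => jI jK; apply/eqP; rewrite eq_le dot_lam_ge0 andbT leNgt.
by apply: contra jK => dot_gt0; rewrite inE jI connect1 //= /ext_adj_sub /= dot_gt0 jI.
Qed.

Lemma Ibar0_detached_dot i j : i \in K -> detached j -> dot (alpha i) (alpha j) = 0.
Proof.
move=> iK /andP [jI]; apply: contraNeq => dot_neq0.
have [<-|ij] := eqVneq i j; first by [].
move: iK; rewrite !inE jI => /andP [iI conn_i] /=.
by apply: connect_trans conn_i (connect1 _); rewrite /ext_adj_sub /= ij dot_neq0 iI jI.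
Qed.

Definition deficit p i := if detached i then c lam i - c p i else 0.
Definition deficit_vec p := \sum_i deficit p i *: alpha i.

Lemma deficit_ge0 s i : 0 <= deficit (wact s lam) i.
Proof.
by rewrite /deficit; case: ifP => // _; rewrite subr_ge0 wact_coef_le.
Qed.

Lemma dot_detached p j : (forall i, i \in I -> c p i = c lam i) -> detached j ->
  dot p (alpha j) = - dot (deficit_vec p) (alpha j).
Proof.
move=> pI det_j; rewrite (dot_sub_expand lam) detached_lam_dot // sub0r dot_suml.
congr (- _); apply: eq_bigr => i _; rewrite dotZl /deficit.
case: ifP => [//|/negbT]; rewrite negb_and !negbK.
case/orP => [/pI ->|iK]; first by rewrite subrr !mul0r.
by rewrite Ibar0_detached_dot // !mulr0.
Qed.

(* The pairing of p with its detached deficit is -|deficit_vec p|^2 < 0. *)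
Lemma detached_descent p : (forall i, i \in I -> c p i = c lam i) ->
  (forall i, 0 <= deficit p i) -> deficit_vec p != 0 ->
  exists2 j, detached j & dot p (alpha j) < 0.
Proof.
move=> pI def_ge0 def_neq0.
have pair_lt0 : \sum_j deficit p j * dot p (alpha j) < 0.
  have -> : \sum_j deficit p j * dot p (alpha j) = - dot (deficit_vec p) (deficit_vec p).
    rewrite {2}/deficit_vec dot_sumr -sumrN; apply: eq_bigr => j _.
    rewrite dotZr /deficit; case: ifP => det_j; last by rewrite !mul0r oppr0.
    by rewrite dot_detached // mulrN.
  by rewrite oppr_lt0 dotxx_gt0.
have [j term_lt0] : exists j, deficit p j * dot p (alpha j) < 0.
  apply/existsP; apply: contraT; rewrite negb_exists => /forallP terms_ge0.
  by rewrite ltNge sumr_ge0 // in pair_lt0 => j _; rewrite leNgt terms_ge0.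
exists j.
  by apply: contraTT term_lt0; rewrite /deficit => /negbTE ->; rewrite mul0r ltxx.
by rewrite ltNge; apply: contraTN term_lt0 => dot_ge0; rewrite -leNgt mulr_ge0.
Qed.

Lemma sum_deficit_refl p j : detached j ->
  \sum_i deficit (refl (alpha j) p) i = \sum_i deficit p i + cartan p (alpha j).
Proof.
move=> det_j; rewrite [LHS](bigD1 j) // [in RHS](bigD1 j) //= addrAC; congr (_ + _).
  by rewrite /deficit det_j coef_refl_simple eqxx mulr1 opprB addrCA addrC.
by apply: eq_bigr => i ij; rewrite /deficit coef_refl_simple_neq.
Qed.

(* While the deficit is nonzero, the reflection given by [detached_descent]
   lowers the total deficit, an integer, by at least 1. *)
Lemma wact_detached_coef s : (forall i, i \in I -> c (wact s lam) i = c lam i) ->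
  forall l, detached l -> c (wact s lam) l = c lam l.
Proof.
move=> sI; suff def0 : deficit_vec (wact s lam) = 0.
  move=> l det_l; have /eqP := coef_comb (deficit (wact s lam)) l.
  by rewrite -/(deficit_vec _) def0 coef0 /deficit det_l eq_sym subr_eq0 => /eqP.
have sum_ge0 t : 0 <= \sum_i deficit (wact t lam) i by apply: sumr_ge0 => i _; apply: deficit_ge0.
move: (archi_boundP (sum_ge0 s)); move: (Num.Def.archi_bound _) => N.
elim: N s sI => [|N IH] s sI sum_lt; first by rewrite ltNge sum_ge0 in sum_lt.
have [//|def_neq0] := eqVneq (deficit_vec (wact s lam)) 0.
have [j det_j dot_lt0] := detached_descent sI (deficit_ge0 s) def_neq0.
have jI : j \notin I by case/andP: det_j.
have s'I i : i \in I -> c (wact (j :: s) lam) i = c lam i.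
  by move=> iI; rewrite coef_refl_simple_neq ?sI //; apply: contraNneq jI => <-.
have def'0 : deficit_vec (wact (j :: s) lam) = 0.
  apply: IH s'I _; rewrite sum_deficit_refl //; move: sum_lt (cartan_wact_le_N1 dot_lt0).
  by rewrite mulrS; lra.
have dot'0 : dot (wact (j :: s) lam) (alpha j) = 0 by rewrite dot_detached // def'0 dot0l oppr0.
have sE : wact s lam = wact (j :: s) lam.
  by rewrite -[LHS](reflK _ (alpha_neq0 j)) [in LHS]reflE /cartan dot'0 mulr0 mul0r scale0r subr0.
by move: dot_lt0; rewrite sE dot'0 ltxx.
Qed.

Lemma face_detached_coef x : face Phi alpha lam I x ->
  forall l, detached l -> c x l = c lam l.
Proof.
case=> [[k [p [w [orbit_p w_ge0 w_sum ->]]]] xI] l det_l.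
have cx i : c (\sum_j w j *: p j) i = \sum_j w j * c (p j) i.
  by rewrite coef_sum; under eq_bigr do rewrite coefZ.
rewrite cx -[c lam l]mul1r -w_sum mulr_suml; apply: eq_bigr => j _.
have [->|wj_neq0] := eqVneq (w j) 0; first by rewrite !mul0r.
have /weyl_orbitP [s pE] := orbit_p j.
rewrite pE wact_detached_coef // => i iI; rewrite -pE.
apply: (convex_comb_eq_max (a := fun j => c (p j) i) w_ge0 w_sum) => //.
  by move=> j'; apply: weyl_orbit_coef_le.
by rewrite -cx xI.
Qed.

Definition lowerable j := exists s,
  (forall i, i \notin K -> c (wact s lam) i = c lam i) /\ c (wact s lam) j < c lam j.

Lemma lowerable_refl s j : j \in K ->
  (forall i, i \notin K -> c (wact s lam) i = c lam i) ->
  0 < dot (wact s lam) (alpha j) -> lowerable j.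
Proof.
move=> jK sK dot_gt0; exists (j :: s); split=> [i iK|] /=.
  by rewrite coef_refl_simple_neq ?sK //; apply: contraNneq iK => ->.
rewrite coef_refl_simple eqxx mulr1.
by move: dot_gt0 (wact_coef_le s j); rewrite -cartan_gt0 ?alpha_neq0 //; lra.
Qed.

Lemma adjacent_dot_gt0 s j j' : j != j' -> dot (alpha j) (alpha j') != 0 ->
  c (wact s lam) j < c lam j -> c (wact s lam) j' = c lam j' ->
  0 < dot (wact s lam) (alpha j').
Proof.
move=> jj' dot_neq0 lt_j eq_j'; rewrite (dot_sub_expand lam) (bigD1 j) //=.
have term_j : (c lam j - c (wact s lam) j) * dot (alpha j) (alpha j') < 0.
  by rewrite pmulr_rlt0 ?subr_gt0 // lt_neqAle dot_neq0 simple_dot_le0.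
have rest_le0 : \sum_(i | i != j) (c lam i - c (wact s lam) i) * dot (alpha i) (alpha j') <= 0.
  apply: sumr_le0 => i _; have [->|ij'] := eqVneq i j'; first by rewrite eq_j' subrr mul0r.
  by rewrite mulr_ge0_le0 ?simple_dot_le0 // subr_ge0 wact_coef_le.
by move: (dot_lam_ge0 j') term_j rest_le0; lra.
Qed.

Lemma Ibar0_lowerable j : j \in K -> lowerable j.
Proof.
rewrite inE => /andP [_ conn_j].
pose P v := if v is Some i then lowerable i else True.
apply: (connect_ind (P := P) _ _ conn_j) => // u [j'|//] conn_u Pu uj'.
have j'K : j' \in K.
  by rewrite inE (connect_trans conn_u (connect1 uj')) andbT; case/and3P: uj'.
case: u conn_u Pu uj' => [i|] _ /=; rewrite /ext_adj_sub /=.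
  case=> s [sK lt_i] /and3P [/andP [ij' dot_neq0] _ _].
  have [lt_j'|] := boolP (c (wact s lam) j' < c lam j'); first by exists s.
  rewrite -leNgt => ge_j'; apply: lowerable_refl j'K sK _.
  apply: adjacent_dot_gt0 ij' dot_neq0 lt_i _.
  by apply/eqP; rewrite eq_le ge_j' wact_coef_le.
by move=> _ /andP [dot_gt0 _]; apply: (@lowerable_refl [::]) dot_gt0.
Qed.

End Faces.

Lemma face_Ibar0 (I : {set 'I_n}) x : face Phi alpha lam I x <->
  weight_polytope Phi lam x /\
  (forall l, l \notin Ibar0 alpha lam I -> c x l = c lam l).
Proof.
split=> [[Px xI] | [Px xK]]; last by split=> // i iI; rewrite xK // inE iI.
split=> // l lK; have [/xI //|lI] := boolP (l \in I).
by apply: (face_detached_coef (conj Px xI)); rewrite /detached lI.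
Qed.

Lemma face_subset_Ibar0 (I J : {set 'I_n}) :
  (forall x, face Phi alpha lam I x -> face Phi alpha lam J x) ->
  Ibar0 alpha lam I \subset Ibar0 alpha lam J.
Proof.
move=> IJ; apply/subsetP => j /Ibar0_lowerable [s [sK lt_j]]; apply: contraT => jKJ.
have /IJ /face_Ibar0 [_ /(_ j jKJ) eq_j] : face Phi alpha lam I (wact s lam).
  by apply/face_Ibar0; split; [apply: wact_polytope | apply: sK].
by move: lt_j; rewrite eq_j ltxx.
Qed.

End Dominant.
End SimpleSystem.

Unset Implicit Arguments.
Theorem corollary4p4 (R : realType) (n : nat) (Phi : seq 'rV[R]_n)
  (alpha : 'I_n -> 'rV[R]_n) (lam : 'rV[R]_n) :
  (0 < n)%N ->
  root_system Phi -> irreducible_rs Phi -> is_base Phi alpha ->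
  dominant_integral alpha lam ->
  forall I J : {set 'I_n},
    (forall x, face Phi alpha lam I x <-> face Phi alpha lam J x) <->
    Ibar0 alpha lam I = Ibar0 alpha lam J.
Proof.
move=> _ Phi_rs _ alpha_base lam_dom I J; split=> [sameF | sameK x].
  by apply/eqP; rewrite eqEsubset !(face_subset_Ibar0 Phi_rs alpha_base lam_dom) // => x /sameF.
by rewrite !(face_Ibar0 Phi_rs alpha_base lam_dom) sameK.
Qed.
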